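(* Let $G_m$ be a parametric regulatory network, $R$ a well-formed set of influence constraints, $v\in V$, and $(L,U)$ a pair of parametrisations. Let $M_v=\{(u,v,s)\in R\mid s\in\{-1,+1\}\}$. Then $\nabla_{M_v}(L,U)=(L,U)$ if and only if for all $\omega,\omega'\in\Omega_v$ with $\omega\preceq_v\omega'$ we have $L_{v,\omega}\le L_{v,\omega'}$ and $U_{v,\omega}\le U_{v,\omega'}$.
   Context: An influence graph is $G=(V,I)$, $V=\{1,\dots,n\}$, $I\subseteq V\times V$; regulators $n^-(v)=\{u\mid(u,v)\in I\}$. $m\in\mathbb N^n$, $D_v=\{0,\dots,m_v\}$, PRN $G_m=(G,m)$. Regulator states $\Omega_v=\prod_{u\in n^-(v)}D_u$; $\omega[u\leftarrow k]$ replaces component $u$ of $\omega$ by $k$. Parametrisations: vectors with coordinates $P_{v,\omega}\in D_v$ for $v\in V$, $\omega\in\Omega_v$. $R\subseteq V\times V\times\{+1,-1,\mathrm o\}$ is well-formed if $u\in n^-(v)$ for all $(u,v,c)\in R$ and never both $(u,v,+1),(u,v,-1)\in R$. Order $\preceq_v$ on $\Omega_v$: $\omega\preceq_v\omega'$ iff for all $u\in n^-(v)$, $\omega_u\le\omega'_u$ if $(u,v,+1)\in R$, $\omega_u\ge\omega'_u$ if $(u,v,-1)\in R$, $\omega_u=\omega'_u$ otherwise. For $s\in\{+1,-1\}$, $\nabla_{(u,v,s)}(L,U)$ is the fixpoint of iterating from $(L,U)$ the map $f(L,U)=(L',U')$ with, for all $\omega\in\Omega_v$, $L'_{v,\omega}=\max(\{L_{v,\omega}\}\cup\{L_{v,\omega[u\leftarrow\omega_u-s]}\mid\omega_u-s\in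 D_u\})$ and $U'_{v,\omega}=\min(\{U_{v,\omega}\}\cup\{U_{v,\omega[u\leftarrow\omega_u+s]}\mid\omega_u+s\in D_u\})$, all coordinates of other nodes unchanged. For a set $R'$ of such constraints, $\nabla_{R'}(L,U)$ is the fixpoint of iterating from $(L,U)$ the composition of the operators $\nabla_r$, $r\in R'$. *)

From HB Require Import structures.
From mathcomp Require Import all_boot all_order all_algebra.
Set Implicit Arguments. Unset Strict Implicit. Unset Printing Implicit Defensive.
Import GRing.Theory Num.Theory.

(* Signs of influence constraints: +1, -1, o *)
Inductive sgn := SPos | SNeg | SObs.
Definition sgn2o (s : sgn) : 'I_3 :=
  match s with SPos => inord 0 | SNeg => inord 1 | SObs => inord 2 end.
Definition o2sgn (i : 'I_3) : option sgn :=
  match val i with 0 => Some SPos | 1 => Some SNeg | 2 => Some SObs | _ => None end.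
Lemma sgn2oK : pcancel sgn2o o2sgn.
Proof. by case; rewrite /o2sgn /= inordK. Qed.
HB.instance Definition _ := Finite.copy sgn (pcan_type sgn2oK).

(* integer value of a +1/-1 sign (o is mapped to 0, never used) *)
Definition sgn_val (s : sgn) : int :=
  match s with SPos => 1%R | SNeg => (-1)%R | SObs => 0%R end.

Section PRN.
(* V = 'I_n, influence graph edges I, PRN maximal values m *)
Variables (n : nat) (I : {set 'I_n * 'I_n}) (m : 'I_n -> nat).

Definition regs (v : 'I_n) : {set 'I_n} := [set u | (u, v) \in I].

Definition fstate := {dffun forall u : 'I_n, 'I_(m u).+1}.

(* Omega_v : regulator states of v, i.e. states whose only (possibly nonzero)
   components are the regulators of v; the other components are fixed to 0 and
   carry no information, so Omega v is in bijection with prod_{u in n^-(v)} D_u. *)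
Definition valid_reg (v : 'I_n) (x : fstate) : bool :=
  [forall u, (u \notin regs v) ==> (val (x u) == 0%N)].
Definition Omega (v : 'I_n) := {x : fstate | valid_reg v x}.

Definition shift (v : 'I_n) (w : Omega v) (u : 'I_n) (d : int) : option (Omega v) :=
  let k : int := ((val (val w u))%:Z + d)%R in
  if (u \in regs v) && (0 <= k)%R && (k <= (m u)%:Z)%R then
    insub (finfun (fun x : 'I_n => @inord (m x) (if x == u then absz k else val (val w x)))
             : fstate)
  else None.

Definition param := {dffun forall v : 'I_n, {ffun Omega v -> 'I_(m v).+1}}.

Definition maxo k (a b : 'I_k) : 'I_k := if (val a < val b)%N then b else a.
Definition mino k (a b : 'I_k) : 'I_k := if (val a < val b)%N then a else b.

Definition fstep (r : 'I_n * 'I_n * sgn) (X : param * param) : param * param :=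
  let: (u, v, s) := r in
  let: (L, U) := X in
  ( [ffun w => [ffun om : Omega w =>
        if w == v then
          maxo (L w om) (match shift om u (- sgn_val s)%R with
                         | Some om' => L w om' | None => L w om end)
        else L w om]] : param,
    [ffun w => [ffun om : Omega w =>
        if w == v then
          mino (U w om) (match shift om u (sgn_val s) with
                         | Some om' => U w om' | None => U w om end)
        else U w om]] : param ).

End PRN.

(* "the fixpoint of iterating f from x": the first iterate of f from x that is
   a fixpoint of f (on a finite type it is reached within #|T| steps if at all;
   if no iterate is a fixpoint, the value defaults to x). *)
Definition iter_fix (T : finType) (f : T -> T) (x : T) : T :=
  match [pick k : 'I_#|T|.+1 | f (iter k f x) == iter k f x] with
  | Some k => iter k f x
  | None => x
  end.

Section Nabla.
Variables (n : nat) (I : {set 'I_n * 'I_n}) (m : 'I_n -> nat).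

Definition nabla_r (r : 'I_n * 'I_n * sgn) (X : param I m * param I m)
  : param I m * param I m :=
  if r.2 == SObs then X else iter_fix (fstep r) X.

(* nabla_{R'}: fixpoint of iterating the composition of the nabla_r, r in R'
   (composition taken along the enumeration of the finite set R') *)
Definition nabla_set (R' : {set 'I_n * 'I_n * sgn}) (X : param I m * param I m)
  : param I m * param I m :=
  iter_fix (foldr (fun r g => nabla_r r \o g) id (enum R')) X.

End Nabla.

Definition well_formed (n : nat) (I : {set 'I_n * 'I_n})
  (R : {set 'I_n * 'I_n * sgn}) : Prop :=
  (forall u v c, (u, v, c) \in R -> (u, v) \in I) /\
  (forall u v, ~ ((u, v, SPos) \in R /\ (u, v, SNeg) \in R)).

Definition Mv (n : nat) (R : {set 'I_n * 'I_n * sgn}) (v : 'I_n)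
  : {set 'I_n * 'I_n * sgn} :=
  [set r in R | (r.1.2 == v) && (r.2 != SObs)].

Definition ord_le (n : nat) (I : {set 'I_n * 'I_n}) (m : 'I_n -> nat)
  (R : {set 'I_n * 'I_n * sgn}) (v : 'I_n) (w w' : Omega I m v) : Prop :=
  forall u, u \in regs I v ->
    if (u, v, SPos) \in R then (val (val w u) <= val (val w' u))%N
    else if (u, v, SNeg) \in R then (val (val w' u) <= val (val w u))%N
    else val (val w u) == val (val w' u).

(* Each propagation operator only tightens the bounds (it raises L and lowers
   U), so a composite of such operators fixes (L, U) exactly when each of them
   does, and iterating an operator to its fixpoint returns (L, U) exactly when
   (L, U) is already fixed.  The operator for (u, v, s) fixes (L, U) iff L_v and
   U_v are nondecreasing along every move w -> w[u <- w_u + s].  These moves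
   generate the order on Omega_v as a preorder: if w is below w' and w <> w',
   some coordinate where they differ can be moved one unit towards w' while
   staying below w'; well-formedness makes every move go upwards. *)
From Pilot Require Import Defs.
From mathcomp Require Import all_boot all_order all_algebra.
From mathcomp Require Import zify.
From Stdlib Require Import Relation_Operators.
Import GRing.Theory.

Set Implicit Arguments.
Unset Strict Implicit.
Unset Printing Implicit Defensive.

Section Inflationary.
Variables (T : Type) (le : T -> T -> Prop).
Hypotheses (le_refl : forall x, le x x)
  (le_trans : forall x y z, le x y -> le y z -> le x z)
  (le_anti : forall x y, le x y -> le y x -> x = y).

Variables (A : eqType) (F : A -> T -> T).
Hypothesis F_inflationary : forall a x, le x (F a x).

Lemma foldr_comp_inflationary (s : seq A) x :
  le x (foldr (fun a g => F a \o g) id s x).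
Proof.
elim: s => [|a s IH] //=; exact: le_trans IH (F_inflationary _ _).
Qed.

Lemma foldr_comp_fixP (s : seq A) x :
  foldr (fun a g => F a \o g) id s x = x <-> {in s, forall a, F a x = x}.
Proof.
elim: s => [|a s IH] /=; first by split=> // _ b; rewrite in_nil.
split=> [fix_as b | fixF].
  have tail_x : foldr (fun a g => F a \o g) id s x = x.
    apply: le_anti (foldr_comp_inflationary _ _); rewrite -[in X in le _ X]fix_as.
    exact: F_inflationary.
  have /IH fix_s := tail_x.
  by rewrite inE => /orP[/eqP-> | /fix_s]; rewrite // -{1}tail_x.
have /IH -> : {in s, forall b, F b x = x} by move=> b sb; apply: fixF; rewrite inE sb orbT.
by apply: fixF; rewrite inE eqxx.
Qed.

End Inflationary.

Section IterFix.
Variables (T : finType) (le : T -> T -> Prop) (f : T -> T).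
Hypotheses (le_refl : forall x, le x x)
  (le_trans : forall x y z, le x y -> le y z -> le x z)
  (le_anti : forall x y, le x y -> le y x -> x = y)
  (f_inflationary : forall x, le x (f x)).

Lemma le_iter x i j : i <= j -> le (iter i f x) (iter j f x).
Proof.
elim: j => [|j IH]; first by rewrite leqn0 => /eqP->.
rewrite leq_eqVlt => /orP[/eqP-> // | /IH le_ij].
exact: le_trans le_ij (f_inflationary _).
Qed.

Lemma iter_fix_fixed x : f (Defs.iter_fix f x) = Defs.iter_fix f x.
Proof.
rewrite /Defs.iter_fix; case: pickP => [k /eqP // | no_fix].
have iter_repeat (i j : 'I_#|T|.+1) : i < j -> iter i f x = iter j f x -> False.
  move=> lt_ij eq_ij; move/eqP: (no_fix i); apply.
  by apply: le_anti (f_inflationary _); rewrite -iterS eq_ij; apply: le_iter.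
have inj_iter : injective (fun k : 'I_#|T|.+1 => iter k f x).
  move=> i j /= eq_ij; apply/val_inj/eqP; case: ltngtP => // lt.
  - by case: (iter_repeat _ _ lt eq_ij).
  - by case: (iter_repeat _ _ lt (esym eq_ij)).
by have := leq_card _ inj_iter; rewrite card_ord ltnn.
Qed.

Lemma iter_fix_ge x : le x (Defs.iter_fix f x).
Proof.
by rewrite /Defs.iter_fix; case: pickP => // k _; exact: le_iter x 0 k (leq0n k).
Qed.

Lemma iter_fix_eq x : Defs.iter_fix f x = x <-> f x = x.
Proof.
split=> [fixed | fx]; first by rewrite -{1}fixed iter_fix_fixed.
have iter_x k : iter k f x = x by elim: k => //= k ->.
by rewrite /Defs.iter_fix; case: pickP.
Qed.

End IterFix.

Lemma maxo_idPl k (a b : 'I_k) : reflect (maxo a b = a) (b <= a).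
Proof.
rewrite /maxo; case: (ltnP a b) => [ab | _]; last by constructor.
by constructor=> ba; move: ab; rewrite ba ltnn.
Qed.

Lemma mino_idPl k (a b : 'I_k) : reflect (mino a b = a) (a <= b).
Proof.
rewrite /mino; case: (ltnP a b) => [ab | ba]; first by rewrite ltnW //; constructor.
apply: (iffP idP) => [ab | <- //].
by apply/val_inj/eqP; rewrite eqn_leq ab ba.
Qed.

Section Propagation.
Variables (n : nat) (I : {set 'I_n * 'I_n}) (m : 'I_n -> nat).

Definition param_le (X Y : param I m * param I m) : Prop :=
  forall v (w : Omega I m v),
    val (X.1 v w) <= val (Y.1 v w) /\ val (Y.2 v w) <= val (X.2 v w).

Lemma param_le_refl X : param_le X X.
Proof. by move=> v w; split. Qed.

Lemma param_le_trans X Y Z : param_le X Y -> param_le Y Z -> param_le X Z.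
Proof.
move=> XY YZ v w; have [? ?] := XY v w; have [? ?] := YZ v w.
by split; apply: leq_trans; eassumption.
Qed.

Lemma param_le_anti X Y : param_le X Y -> param_le Y X -> X = Y.
Proof.
case: X Y => [L U] [L' U'] XY YX.
have param_eq (P Q : param I m) :
    (forall v w, val (P v w) <= val (Q v w) <= val (P v w)) -> P = Q.
  move=> PQ; apply/ffunP => v; apply/ffunP => w.
  by apply/val_inj/eqP; rewrite eqn_leq PQ.
congr pair; apply: param_eq => v w; apply/andP.
  by case: (XY v w); case: (YX v w).
by case: (XY v w); case: (YX v w).
Qed.

Lemma fstep_inflationary r X : param_le X (fstep r X).
Proof.
case: r X => [[u v] s] [L U] w om /=; rewrite !ffunE.
case: (w == v) => //; rewrite /maxo /mino.
split; case: ifP => //; first exact: ltnW.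
by move/negbT; rewrite -leqNgt.
Qed.

Lemma nabla_r_inflationary r X : param_le X (nabla_r r X).
Proof.
rewrite /nabla_r; case: ifP => _; first exact: param_le_refl.
exact: iter_fix_ge param_le_refl param_le_trans (@fstep_inflationary r) X.
Qed.

Lemma nabla_r_fixE r (X : param I m * param I m) :
  r.2 != SObs -> nabla_r r X = X <-> fstep r X = X.
Proof.
move=> /negbTE r_sign; rewrite /nabla_r r_sign.
exact: iter_fix_eq param_le_refl param_le_trans param_le_anti (@fstep_inflationary r) X.
Qed.

Lemma nabla_set_fixP R' (X : param I m * param I m) :
  nabla_set R' X = X <-> {in R', forall r, nabla_r r X = X}.
Proof.
have nabla_infl := nabla_r_inflationary.
have comp_infl := foldr_comp_inflationary param_le_refl param_le_trans nabla_infl.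
rewrite /nabla_set.
apply: (iff_trans (iter_fix_eq param_le_refl param_le_trans param_le_anti (comp_infl _) X)).
apply: (iff_trans (foldr_comp_fixP param_le_refl param_le_trans param_le_anti nabla_infl _ _)).
by split=> fixR r; move: (fixR r); rewrite mem_enum.
Qed.

End Propagation.

Section Moves.
Variables (n : nat) (I : {set 'I_n * 'I_n}) (m : 'I_n -> nat) (v : 'I_n).
Local Notation Omega := (Omega I m v).
Local Notation coord w u := (val (val w u)).

(* [inordK] is stated for [nat_of_ord], which [rewrite] does not match against [val]. *)
Lemma val_inord k i : i <= k -> val (@inord k i) = i.
Proof. exact: inordK. Qed.

Lemma eq_Omega (w w' : Omega) : (forall u, coord w u = coord w' u) -> w = w'.
Proof. by move=> ww'; apply/val_inj/ffunP => u; apply/val_inj. Qed.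

Lemma coord_nonreg (w : Omega) u : u \notin regs I v -> coord w u = 0.
Proof. by move=> nreg; have /forallP/(_ u)/implyP/(_ nreg)/eqP := valP w. Qed.

Lemma shift_someP (w w' : Omega) u d :
  shift w u d = Some w' <->
  [/\ u \in regs I v, ((coord w' u)%:Z = (coord w u)%:Z + d)%R
    & forall x, x != u -> coord w' x = coord w x].
Proof.
rewrite /shift; split.
  case: ifP => // /andP[/andP[reg lo] hi]; case: insubP => // w1 _ val_w1 [<-].
  split=> [//||x /negbTE xu]; rewrite val_w1 ffunE ?eqxx ?xu val_inord //;
    [lia | lia | by rewrite -ltnS ltn_ord].
move=> [reg w'_u w'_x].
have := ltn_ord (val w' u); rewrite reg -!w'_u le0z_nat lez_nat => /ltnSE ->.
rewrite (_ : finfun _ = val w') ?valK //.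
apply/ffunP => x; apply/val_inj; rewrite ffunE.
case: eqP => [-> | /eqP xu]; rewrite val_inord ?(w'_x x xu) // -ltnS; exact: ltn_ord.
Qed.

Lemma shift_exists (w : Omega) u d :
  u \in regs I v -> (0 <= (coord w u)%:Z + d <= (m u)%:Z)%R ->
  exists w', shift w u d = Some w'.
Proof.
move=> reg /andP[lo hi]; rewrite /shift reg lo hi /=.
case: insubP => [w' _ _ | /negP not_valid]; first by exists w'.
case: not_valid; apply/forallP => x; apply/implyP => nreg.
have xu : x != u by apply: contraNneq nreg => ->.
by rewrite ffunE (negbTE xu) val_inord ?coord_nonreg // -ltnS ltn_ord.
Qed.

Lemma shiftK (w w' : Omega) u d : shift w u d = Some w' -> shift w' u (- d)%R = Some w.
Proof.
move=> /shift_someP[reg w'_u w'_x]; apply/shift_someP; split=> // [|x /w'_x -> //].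
by rewrite w'_u addrK.
Qed.

Lemma fstep_fixedP u s (L U : param I m) :
  fstep (u, v, s) (L, U) = (L, U) <->
  forall w w' : Omega, shift w u (sgn_val s) = Some w' ->
    val (L v w) <= val (L v w') /\ val (U v w) <= val (U v w').
Proof.
split=> [[fixL fixU] w w' sh | mono].
  split.
    have := congr1 (fun P : param I m => P v w') fixL.
    by rewrite !ffunE eqxx (shiftK sh) => /maxo_idPl.
  have := congr1 (fun P : param I m => P v w) fixU.
  by rewrite !ffunE eqxx sh => /mino_idPl.
congr pair; apply/ffunP => x; apply/ffunP => w; rewrite !ffunE.
  case: eqP => // xv; subst x; apply/maxo_idPl.
  by case sh: shift => [w'|] //; move: (shiftK sh); rewrite opprK => /mono[].
case: eqP => // xv; subst x; apply/mino_idPl.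
by case sh: shift => [w'|] //; case: (mono _ _ sh).
Qed.

Variable R : {set 'I_n * 'I_n * sgn}.

Definition Mv_step (w w' : Omega) : Prop :=
  exists u s, (u, v, s) \in Mv R v /\ shift w u (sgn_val s) = Some w'.

Definition coord_le u (a b : nat) : bool :=
  if (u, v, SPos) \in R then a <= b else if (u, v, SNeg) \in R then b <= a else a == b.

Lemma coord_le_refl u a : coord_le u a a.
Proof. by rewrite /coord_le leqnn eqxx !if_same. Qed.

Lemma Mv_step_ord_le w w' : well_formed I R -> Mv_step w w' -> ord_le R w w'.
Proof.
move=> [_ no_both] [u [s [uMv /shift_someP[_ w'_u w'_x]]]] x _.
have [-> | xu] := eqVneq x u; last by rewrite w'_x //; exact: coord_le_refl.
move: uMv; rewrite inE => /and3P[uR _ s_obs].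
case: s s_obs uR w'_u => [_ | _ | /negP[//]] uR /= w'_u.
  by rewrite uR; lia.
have -> : ((u, v, SPos) \in R) = false by apply/negP => uP; exact: (no_both u v).
by rewrite uR; lia.
Qed.

Definition Omega_dist (w w' : Omega) : nat := \sum_x `|coord w x - coord w' x|.

Lemma Omega_dist_shift (w w' w'' : Omega) u :
  (forall x, x != u -> coord w'' x = coord w x) ->
  `|coord w'' u - coord w' u| < `|coord w u - coord w' u| ->
  Omega_dist w'' w' < Omega_dist w w'.
Proof.
move=> w''_x closer; rewrite /Omega_dist (bigD1 u) // [X in _ < X](bigD1 u) //=.
by rewrite (eq_bigr (fun x => `|coord w x - coord w' x|)) => [|x /w''_x ->]; rewrite ?ltn_add2r.
Qed.

Lemma ord_le_shift (w w' w'' : Omega) u :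
  ord_le R w w' -> (forall x, x != u -> coord w'' x = coord w x) ->
  coord_le u (coord w'' u) (coord w' u) -> ord_le R w'' w'.
Proof.
move=> ww' w''_x w''_u x reg.
by have [-> // | xu] := eqVneq x u; rewrite w''_x //; exact: ww'.
Qed.

Lemma ord_le_step (w w' : Omega) : ord_le R w w' -> w != w' ->
  exists2 w'', Mv_step w w'' & ord_le R w'' w' /\ Omega_dist w'' w' < Omega_dist w w'.
Proof.
move=> ww' neq.
have [u ne] : exists u, coord w u != coord w' u.
  case: (pickP (fun x => coord w x != coord w' x)) => [u ne | same]; first by exists u.
  by case/eqP: neq; apply: eq_Omega => x; apply/eqP/negbFE/same.
have reg : u \in regs I v by apply: contraR ne => nreg; rewrite !coord_nonreg.
have w_bound : coord w u <= m u by rewrite -ltnS ltn_ord.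
have w'_bound : coord w' u <= m u by rewrite -ltnS ltn_ord.
suff [s [uMv bounds towards]] : exists s, [/\ (u, v, s) \in Mv R v,
    (0 <= (coord w u)%:Z + sgn_val s <= (m u)%:Z)%R &
    forall c : nat, (c%:Z = (coord w u)%:Z + sgn_val s)%R ->
      coord_le u c (coord w' u) /\ `|c - coord w' u| < `|coord w u - coord w' u|].
  have [w'' sh] := shift_exists reg bounds.
  have [_ /towards[c_le closer] w''_x] := (shift_someP w w'' u (sgn_val s)).1 sh.
  exists w''; first by exists u, s.
  by split; [exact: ord_le_shift ww' w''_x c_le | exact: Omega_dist_shift w''_x closer].
have := ww' u reg; rewrite /coord_le.
case: ifP => uP w_le.
  have lt : coord w u < coord w' u by rewrite ltn_neqAle ne.
  exists SPos; split; first by rewrite inE uP eqxx /=; apply/eqP.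
    by rewrite [sgn_val _]/=; lia.
  by move=> c; rewrite [sgn_val _]/=; lia.
case: ifP w_le => uN w_le; last by rewrite w_le in ne.
have lt : coord w' u < coord w u by rewrite ltn_neqAle eq_sym ne.
exists SNeg; split; first by rewrite inE uN eqxx /=; apply/eqP.
  by rewrite [sgn_val _]/=; lia.
by move=> c; rewrite [sgn_val _]/=; lia.
Qed.

Lemma ord_le_clos_rt (w w' : Omega) : ord_le R w w' -> clos_refl_trans _ Mv_step w w'.
Proof.
have [k] := ubnP (Omega_dist w w'); elim: k w => // k IH w dist_lt ww'.
have [-> | neq] := eqVneq w w'; first exact: rt_refl.
have [w'' step [w''w' closer]] := ord_le_step ww' neq.
apply: rt_trans (rt_step _ _ _ _ step) (IH _ _ w''w').
exact: leq_trans closer dist_lt.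
Qed.

Lemma Mv_fixedP (L U : param I m) :
  {in Mv R v, forall r, nabla_r r (L, U) = (L, U)} <->
  forall w w', Mv_step w w' -> val (L v w) <= val (L v w') /\ val (U v w) <= val (U v w').
Proof.
split=> [fixed w w' [u [s [uMv sh]]] | mono [[u x] s] uMv].
  have s_obs : s != SObs by move: uMv; rewrite inE => /and3P[].
  by have /(nabla_r_fixE (r := (u, v, s)) _ s_obs)/fstep_fixedP := fixed _ uMv; apply.
move: (uMv); rewrite inE /= => /and3P[_ /eqP xv s_obs]; subst x.
apply/(nabla_r_fixE (r := (u, v, s)) _ s_obs)/fstep_fixedP => w w' sh.
by apply: mono; exists u, s.
Qed.

End Moves.

Theorem lemma4 (n : nat) (I : {set 'I_n * 'I_n}) (m : 'I_n -> nat)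
  (R : {set 'I_n * 'I_n * sgn}) (v : 'I_n) (L U : param I m) :
  well_formed I R ->
  (nabla_set (Mv R v) (L, U) = (L, U) <->
   (forall w w' : Omega I m v, @ord_le n I m R v w w' ->
      (val (L v w) <= val (L v w'))%N /\ (val (U v w) <= val (U v w'))%N)).
Proof.
move=> wf; apply: (iff_trans (nabla_set_fixP _ _)); apply: (iff_trans (Mv_fixedP v R L U)).
split=> [mono w w' /ord_le_clos_rt | mono w w' /(Mv_step_ord_le wf)]; last exact: mono.
elim=> [x y /mono // | x | x y z _ [Lxy Uxy] _ [Lyz Uyz]]; first by split.
by split; [exact: leq_trans Lxy Lyz | exact: leq_trans Uxy Uyz].
Qed.
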